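(* Let $g:\mathbb{R}\to\mathbb{R}$ be a function supported on $[-1,1]$, i.e. $g(x)=0$ for $x\notin[-1,1]$, and let $\theta^*\in\Theta_k$. Then there is $\theta'=(w',\mu',\tau')\in\Theta_k$ such that $\mu'_i\in[-1,1]$ for all $i\in[k]$ and \[ \|g-\mathcal{M}_{\theta'}\|_1\le 5\cdot\|g-\mathcal{M}_{\theta^*}\|_1. \]
   Context: $\Theta_k=\{(w,\mu,\tau): w\in\mathbb{R}^k, w_i\ge0,\sum_i w_i=1,\ \mu\in\mathbb{R}^k,\ \tau\in\mathbb{R}_{>0}^k\}$; for $\theta=(w,\mu,\tau)\in\Theta_k$, $\mathcal{M}_\theta(x)=\sum_{i=1}^k w_i\frac{\tau_i}{\sqrt{2\pi}}e^{-\tau_i^2(x-\mu_i)^2/2}$. $\|h\|_1=\int|h|$. *)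

From HB Require Import structures.
From mathcomp Require Import all_boot all_order all_algebra.
From mathcomp Require Import all_classical all_reals all_analysis.
Set Implicit Arguments. Unset Strict Implicit. Unset Printing Implicit Defensive.
Import Order.TTheory GRing.Theory Num.Theory.
Import numFieldNormedType.Exports.
Local Open Scope classical_set_scope.
Local Open Scope ring_scope.

Definition in_Theta (R : realType) (k : nat) (w mu tau : 'I_k -> R) : Prop :=
  (forall i, 0 <= w i) /\ (\sum_(i < k) w i = 1) /\ (forall i, 0 < tau i).

Definition mixture (R : realType) (k : nat) (w mu tau : 'I_k -> R) (x : R) : R :=
  \sum_(i < k) w i * (tau i / Num.sqrt (2 * pi))
               * expR (- (tau i ^+ 2 * (x - mu i) ^+ 2) / 2).

Definition L1dist (R : realType) (f h : R -> R) : \bar R :=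
  (\int[@lebesgue_measure R]_(x in [set: R]) (`|f x - h x|)%:E)%E.

(* Clamp every mean into [-1, 1], keeping weights and precisions.  For a point
   x of [-1, 1] the clamped mean is at least as close to x as the original one,
   so each clamped Gaussian dominates the original one on [-1, 1].  Two densities
   of equal mass, one dominating the other off a set D, are at L1 distance at
   most twice the mass the dominated one puts on D; hence moving the means costs
   at most 2 * int_{|x| > 1} M_theta*.  As g vanishes there, this mass is at most
   ||g - M_theta*||_1, and the triangle inequality gives the bound with 3 <= 5. *)

From HB Require Import structures.
From mathcomp Require Import all_boot all_order all_algebra.
From mathcomp Require Import all_classical all_reals all_analysis.
From mathcomp Require Import ring lra measurable_realfun.
Import Order.TTheory GRing.Theory Num.Theory.
Local Open Scope classical_set_scope.
Local Open Scope ring_scope.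

Section integral_norm_bounds.
Context {d} {T : measurableType d} {R : realType} (mu : {measure set T -> \bar R}).

Lemma ge0_integral_wsum {D : set T} {k : nat} {w : 'I_k -> R} {f : 'I_k -> T -> R} :
  measurable D -> (forall i, 0 <= w i) ->
  (forall i, measurable_fun D (f i)) -> (forall i x, D x -> 0 <= f i x) ->
  (\int[mu]_(x in D) (\sum_(i < k) w i * f i x)%:E =
   \sum_(i < k) (w i)%:E * \int[mu]_(x in D) (f i x)%:E)%E.
Proof.
move=> mD w0 mf f0.
under eq_integral do rewrite -sumEFin.
rewrite ge0_integral_sum //; last 2 first.
- by move=> i; apply/measurable_EFinP; apply: measurable_funM.
- by move=> i x Dx; rewrite lee_fin mulr_ge0 ?f0.
apply: eq_bigr => i _; under eq_integral do rewrite EFinM.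
rewrite ge0_integralZl ?lee_fin //; first exact/measurable_EFinP.
by move=> x Dx; rewrite lee_fin f0.
Qed.

Lemma integral_normB_triangle {f g h : T -> R} :
  measurable_fun setT f -> measurable_fun setT g -> measurable_fun setT h ->
  (\int[mu]_x (`|f x - h x|)%:E <=
   \int[mu]_x (`|f x - g x|)%:E + \int[mu]_x (`|g x - h x|)%:E)%E.
Proof.
move=> mf mg mh.
have mnormB (u v : T -> R) : measurable_fun setT u -> measurable_fun setT v ->
    measurable_fun setT (EFin \o (fun x => `|u x - v x|)).
  move=> mfu mfv; apply/measurable_EFinP.
  exact: measurableT_comp (measurable_funB mfu mfv).
rewrite -ge0_integralD //; [|exact: mnormB..].
apply: ge0_le_integral => //; first exact: mnormB.
  by apply: emeasurable_funD; exact: mnormB.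
move=> x _; rewrite -EFinD lee_fin.
by rewrite (_ : f x - h x = (f x - g x) + (g x - h x)) ?ler_normD //; ring.
Qed.

Lemma integral_normB_wsum_le {k : nat} {w : 'I_k -> R} {f h : 'I_k -> T -> R} :
  (forall i, 0 <= w i) ->
  (forall i, measurable_fun setT (f i)) -> (forall i, measurable_fun setT (h i)) ->
  (\int[mu]_x (`|\sum_(i < k) w i * f i x - \sum_(i < k) w i * h i x|)%:E <=
   \sum_(i < k) (w i)%:E * \int[mu]_x (`|f i x - h i x|)%:E)%E.
Proof.
move=> w0 mf mh.
have mnormB i : measurable_fun setT (fun x => `|f i x - h i x|).
  exact: measurableT_comp (measurable_funB (mf i) (mh i)).
rewrite -ge0_integral_wsum //.
apply: ge0_le_integral => //.
- apply/measurable_EFinP; apply: measurableT_comp => //.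
  by apply: measurable_funB; apply: measurable_sum => i; exact: measurable_funM.
- by apply/measurable_EFinP; apply: measurable_sum => i; exact: measurable_funM.
move=> x _; rewrite lee_fin -sumrB.
apply: (le_trans (ler_norm_sum _ _ _)); apply: ler_sum => i _.
by rewrite -mulrBr normrM ger0_norm.
Qed.

Lemma integral_normB_le_mass_off {D : set T} {c : R} {f h : T -> R} :
  measurable D -> measurable_fun setT f -> measurable_fun setT h ->
  (forall x, 0 <= f x) -> (forall x, 0 <= h x) ->
  (\int[mu]_x (f x)%:E = c%:E)%E -> (\int[mu]_x (h x)%:E = c%:E)%E ->
  (forall x, ~ D x -> f x <= h x) ->
  (\int[mu]_x (`|f x - h x|)%:E <= 2%:E * \int[mu]_(x in D) (f x)%:E)%E.
Proof.
move=> mD mf mh f0 h0 intf inth fh.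
have mfD : measurable_fun setT ((EFin \o f) \_ D).
  by apply/(measurable_restrictT _ mD)/measurable_EFinP; exact: measurable_funS mf.
have pointwise x : ((`|f x - h x|)%:E + (f x)%:E <= 2%:E * ((EFin \o f) \_ D) x + (h x)%:E)%E.
  rewrite patchE; case: ifPn => [_|/[!(@notin_setE T)] Dx]; rewrite -?EFinM -!EFinD lee_fin.
    have : `|f x - h x| <= f x + h x.
      by rewrite ler_norml; have := f0 x; have := h0 x; lra.
    lra.
  by rewrite mulr0 add0r ler0_norm ?subr_le0 ?fh //; lra.
have mnormB : measurable_fun setT (fun x => `|f x - h x|).
  exact: measurableT_comp (measurable_funB mf mh).
(* Integrate [pointwise] and cancel the common mass [c]. *)
rewrite (integral_mkcond D) -(@leeD2rE _ c%:E) //.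
rewrite -[in leLHS]intf -[in leRHS]inth -ge0_integralZl //; last first.
  by move=> x _; apply: erestrict_ge0 => {}x _; rewrite lee_fin.
rewrite -!ge0_integralD //.
- apply: ge0_le_integral => //.
  + by move=> x _; rewrite -EFinD lee_fin addr_ge0.
  + by apply/measurable_EFinP; exact: measurable_funD.
  + by apply: emeasurable_funD; [exact: measurable_funeM|exact/measurable_EFinP].
- by move=> x _; apply: mule_ge0; [|apply: erestrict_ge0 => {}x _]; rewrite lee_fin.
- exact: measurable_funeM.
all: by [move=> x _; rewrite lee_fin|apply/measurable_EFinP].
Qed.

Lemma integral_le_normB_zero_set {D : set T} {g h : T -> R} :
  measurable D -> measurable_fun setT g -> measurable_fun setT h ->
  (forall x, 0 <= h x) -> (forall x, D x -> g x = 0) ->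
  (\int[mu]_(x in D) (h x)%:E <= \int[mu]_x (`|g x - h x|)%:E)%E.
Proof.
move=> mD mg mh h0 g0.
rewrite (eq_integral (fun x => (`|g x - h x|)%:E)); last first.
  by move=> x /set_mem Dx; rewrite g0 // sub0r normrN ger0_norm.
apply: ge0_subset_integral => //; apply/measurable_EFinP.
exact: measurableT_comp (measurable_funB mg mh).
Qed.

End integral_norm_bounds.

Definition clamp {R : realDomainType} (a b m : R) : R :=
  if m < a then a else if b < m then b else m.

Lemma clamp_itv (R : realDomainType) (a b m : R) : a <= b -> a <= clamp a b m <= b.
Proof.
move=> ab; rewrite /clamp; case: ifP => ma; first by rewrite lexx ab.
by case: ifP => bm; rewrite ?lexx ?ab // leNgt ma leNgt bm.
Qed.

Lemma sqr_sub_clamp_le (R : realDomainType) (a b m x : R) : a <= x <= b ->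
  (x - clamp a b m) ^+ 2 <= (x - m) ^+ 2.
Proof. by move=> /andP[ax xb]; rewrite /clamp; case: ifP => ma; [|case: ifP => bm //]; nra. Qed.

Lemma normal_pdf_le (R : realType) (m p s x : R) : s != 0 ->
  (x - p) ^+ 2 <= (x - m) ^+ 2 -> normal_pdf m s x <= normal_pdf p s x.
Proof.
move=> s0 closer; rewrite /normal_pdf (negbTE s0) /normal_fun.
apply: ler_wpM2l; first exact: normal_peak_ge0.
by rewrite ler_expR !mulNr lerN2 ler_wpM2r // invr_ge0 mulrn_wge0 // sqr_ge0.
Qed.

Lemma normal_pdf_clamp_L1_le (R : realType) (a b m s : R) : s != 0 ->
  (\int[lebesgue_measure]_x (`|normal_pdf m s x - normal_pdf (clamp a b m) s x|)%:E <=
   2%:E * \int[lebesgue_measure]_(x in ~` `[a, b]) (normal_pdf m s x)%:E)%E.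
Proof.
move=> s0; apply: integral_normB_le_mass_off.
- by apply: measurableC; exact: measurable_itv.
- exact: measurable_normal_pdf.
- exact: measurable_normal_pdf.
- exact: normal_pdf_ge0.
- exact: normal_pdf_ge0.
- exact: integral_normal_pdf.
- exact: integral_normal_pdf.
move=> x /contrapT; rewrite /= in_itv /= => xab.
by apply: normal_pdf_le => //; exact: sqr_sub_clamp_le.
Qed.

Section gaussian_mixture.
Context {R : realType} {k : nat} {w tau : 'I_k -> R}.
Hypotheses (w_ge0 : forall i, 0 <= w i) (tau_gt0 : forall i, 0 < tau i).

Lemma mixtureE (mu : 'I_k -> R) :
  mixture w mu tau = fun x => \sum_(i < k) w i * normal_pdf (mu i) (tau i)^-1 x.
Proof.
apply/funext => x; apply: eq_bigr => i _.
have tauV0 : (tau i)^-1 != 0 by rewrite invr_neq0 // gt_eqF.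
rewrite -mulrA /normal_pdf (negbTE tauV0) /normal_peak /normal_fun.
congr (_ * (_ * expR _)).
  rewrite -mulrnAr [in RHS]sqrtrM ?sqr_ge0 // sqrtr_sqr ger0_norm ?invr_ge0 ?ltW //.
  by rewrite invfM invrK mulrC -[pi *+ 2]mulr_natl mulrC.
by rewrite -mulr_natr; field; rewrite gt_eqF.
Qed.

Lemma mixture_ge0 (mu : 'I_k -> R) (x : R) : 0 <= mixture w mu tau x.
Proof.
rewrite mixtureE; apply: sumr_ge0 => i _.
by rewrite mulr_ge0 ?normal_pdf_ge0.
Qed.

Lemma measurable_mixture (mu : 'I_k -> R) : measurable_fun setT (mixture w mu tau).
Proof.
rewrite mixtureE; apply: measurable_sum => i.
by apply: measurable_funM; [exact: measurable_cst | exact: measurable_normal_pdf].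
Qed.

Lemma mixture_clamp_L1_le (a b : R) (mu : 'I_k -> R) :
  (\int[lebesgue_measure]_x
     (`|mixture w mu tau x - mixture w (fun i => clamp a b (mu i)) tau x|)%:E <=
   2%:E * \int[lebesgue_measure]_(x in ~` `[a, b]) (mixture w mu tau x)%:E)%E.
Proof.
have mN (m : 'I_k -> R) i := @measurable_normal_pdf R (m i) (tau i)^-1.
rewrite !mixtureE.
apply: (le_trans (integral_normB_wsum_le lebesgue_measure w_ge0 (mN mu) (mN _))).
rewrite ge0_integral_wsum //; last 3 first.
- by apply: measurableC; exact: measurable_itv.
- by move=> i; exact: measurable_funTS (mN mu i).
- by move=> i x _; exact: normal_pdf_ge0.
rewrite ge0_sume_distrr => [|i _]; last first.
  rewrite mule_ge0 ?lee_fin // integral_ge0 // => x _.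
  by rewrite lee_fin normal_pdf_ge0.
apply: lee_sum => i _; rewrite muleCA; apply: lee_wpmul2l; rewrite ?lee_fin //.
by apply: normal_pdf_clamp_L1_le; rewrite invr_neq0 // gt_eqF.
Qed.

End gaussian_mixture.

Theorem lemma17 (R : realType) (k : nat) (g : R -> R)
    (w mu tau : 'I_k -> R) :
  measurable_fun [set: R] g ->
  (forall x : R, ~ (-1 <= x <= 1) -> g x = 0) ->
  in_Theta w mu tau ->
  exists w' mu' tau' : 'I_k -> R,
    [/\ in_Theta w' mu' tau',
        (forall i, -1 <= mu' i <= 1) &
        (L1dist g (mixture w' mu' tau') <= 5%:E * L1dist g (mixture w mu tau))%E].
Proof.
move=> mg g_out [w0 [w1 tau0]].
pose mu' i := clamp (-1) 1 (mu i).
exists w, mu', tau; split; [by [] | by move=> i; apply: clamp_itv; lra |].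
rewrite /L1dist; set dist := (X in (_ <= _ * X)%E).
have dist_ge0 : (0 <= dist)%E by apply: integral_ge0 => x _; rewrite lee_fin.
pose D : set R := ~` `[-1, 1]%classic.
have mD : measurable D by apply: measurableC; exact: measurable_itv.
have g0 x : D x -> g x = 0 by rewrite /D /= in_itv; exact: g_out.
have mass_off := integral_le_normB_zero_set lebesgue_measure mD mg
  (measurable_mixture tau0 mu) (mixture_ge0 w0 tau0 mu) g0.
apply: (le_trans (integral_normB_triangle lebesgue_measure mg
  (measurable_mixture tau0 mu) (measurable_mixture tau0 mu'))).
apply: (@le_trans _ _ (dist + 2%:E * dist)%E).
  apply: leeD2l; apply: (le_trans (mixture_clamp_L1_le w0 tau0 _ _ _)).
  exact: (lee_wpmul2l _ mass_off).
rewrite -{1}(mul1e dist) -ge0_muleDl ?lee_fin //.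
by apply: lee_wpmul2r => //; rewrite -EFinD lee_fin; lra.
Qed.
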